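(* Let $\varepsilon\in(0,1/256]$, $\tau\in\Gamma$, $\mathcal S=\mathcal S(\tau)$ and $\rho\in\{1,\dots,\lceil1/\varepsilon\rceil\}^{|\tau|}$. Every extreme point $x^*$ of $P(\mathcal S,\rho)$ can be rounded to an integral vector $\bar x\in P(\mathcal S,\rho)\cap\{0,1\}^n$ with $c^T\bar x\le(1+2\varepsilon)\,c^Tx^*$.
   Context: Minimum Knapsack data: $n$ items with costs $c\in\mathbb{R}^n_{\ge0}$, weights $w\in\mathbb{R}^n_{\ge0}$, target $b$; items are indexed so that $1=c_1\ge c_2\ge\dots\ge c_n$. $C_\varepsilon=\lceil\log_{1+\varepsilon}(1/\varepsilon)\rceil$. $\Gamma$ is the set of integer vectors $\tau=(\tau_1,\dots,\tau_K)\in\mathbb{Z}_{\ge0}^K$ with $0\le K=|\tau|\le\lceil2\sqrt{C_\varepsilon}\rceil$, $\tau_k+k\le\tau_{k+1}$ for $k\in[K-1]$, and $\tau_K\le C_\varepsilon-1$. For $\tau\in\Gamma$, $\mathcal S(\tau)=\{S_1,\dots,S_K,S_\infty\}$ where $S_k=\{i\in\{2,\dots,n\}:(1+\varepsilon)^{-\tau_k}\ge c_i>(1+\varepsilon)^{-\min\{\tau_k+k,C_\varepsilon\}}\}$ for $k\in[K]$, and $S_\infty=\{i\in\{2,\dots,n\}: c_i\le(1+\varepsilon)^{-C_\varepsilon}\text{ and } c_i<\min_{l\in S_K}c_l\}$ (the second condition omitted if $K=0$). For $\rho\in\{1,\dots,\lceil1/\varepsilon\rceil\}^K$, $P(\mathcal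 S,\rho)$ is the set of $x\in\mathbb{R}^n$ with: $x_1=1$; $w^Tx\ge b$; $\sum_{i\in S_k}x_i=\rho_k$ for $k\in[K]$ with $\rho_k<\lceil1/\varepsilon\rceil$; $\sum_{i\in S_k}x_i\ge\rho_k$ for $k\in[K]$ with $\rho_k=\lceil1/\varepsilon\rceil$; $x_i=0$ for $i\in\{2,\dots,n\}\setminus\bigcup_{k\in[K]\cup\{\infty\}}S_k$; $0\le x_i\le1$ for $i\in\bigcup_{k\in[K]\cup\{\infty\}}S_k$. *)

From Stdlib Require Import Reals Lra Lia List.
Import ListNotations.
Open Scope R_scope.
Local Open Scope bool_scope.

(* Items are indexed 1..n; vectors are functions nat -> R (only indices
   1..n are meaningful). *)

(* ceiling of a real: 1 - up(-x) = -floor(-x) *)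
Definition Rceil (x : R) : Z := (1 - up (- x))%Z.

Definition Ceps (eps : R) : nat := Z.to_nat (Rceil (ln (1 / eps) / ln (1 + eps))).

Definition Meps (eps : R) : nat := Z.to_nat (Rceil (1 / eps)).

Fixpoint sum_to (f : nat -> R) (n : nat) : R :=
  match n with
  | O => 0
  | S m => sum_to f m + f (S m)
  end.

Definition Rleb (a b : R) : bool := if Rle_dec a b then true else false.
Definition Rltb (a b : R) : bool := if Rlt_dec a b then true else false.

Definition nth1 (l : list nat) (k : nat) : nat := nth (k - 1) l 0%nat.

Definition in_Gamma (eps : R) (tau : list nat) : Prop :=
  let C := Ceps eps in
  let K := length tau in
  (IZR (Z.of_nat K) <= IZR (Rceil (2 * sqrt (INR C))))%R /\
  (forall k, (1 <= k <= K - 1)%nat -> (nth1 tau k + k <= nth1 tau (k + 1))%nat) /\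
  ((K > 0)%nat -> (nth1 tau K + 1 <= C)%nat).

Definition inS (eps : R) (n : nat) (c : nat -> R) (tau : list nat) (k i : nat) : bool :=
  let C := Ceps eps in
  let tk := nth1 tau k in
  Nat.leb 2 i && Nat.leb i n &&
  Rleb (c i) (/ (1 + eps) ^ tk) &&
  Rltb (/ (1 + eps) ^ (Nat.min (tk + k) C)) (c i).

(* i in S_infinity; min over an empty S_K is +infinity *)
Definition inSinf (eps : R) (n : nat) (c : nat -> R) (tau : list nat) (i : nat) : bool :=
  let C := Ceps eps in
  let K := length tau in
  Nat.leb 2 i && Nat.leb i n &&
  Rleb (c i) (/ (1 + eps) ^ C) &&
  (Nat.eqb K 0 ||
   forallb (fun l => negb (inS eps n c tau K l) || Rltb (c i) (c l)) (seq 1 n)).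

Definition inUnion (eps : R) (n : nat) (c : nat -> R) (tau : list nat) (i : nat) : bool :=
  existsb (fun k => inS eps n c tau k i) (seq 1 (length tau)) || inSinf eps n c tau i.

Definition valid_rho (eps : R) (tau rho : list nat) : Prop :=
  length rho = length tau /\
  forall k, (1 <= k <= length rho)%nat -> (1 <= nth1 rho k <= Meps eps)%nat.

Definition inP (eps : R) (n : nat) (c w : nat -> R) (b : R) (tau rho : list nat)
  (x : nat -> R) : Prop :=
  x 1%nat = 1 /\
  sum_to (fun i => w i * x i) n >= b /\
  (forall k, (1 <= k <= length tau)%nat ->
     let s := sum_to (fun i => if inS eps n c tau k i then x i else 0) n in
     ((nth1 rho k < Meps eps)%nat -> s = INR (nth1 rho k)) /\
     (nth1 rho k = Meps eps -> s >= INR (nth1 rho k))) /\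
  (forall i, (2 <= i <= n)%nat -> inUnion eps n c tau i = false -> x i = 0) /\
  (forall i, (2 <= i <= n)%nat -> inUnion eps n c tau i = true -> 0 <= x i <= 1).

Definition extreme_point (n : nat) (P : (nat -> R) -> Prop) (x : nat -> R) : Prop :=
  P x /\
  forall y z lam, P y -> P z -> 0 < lam < 1 ->
    (forall i, (1 <= i <= n)%nat -> x i = lam * y i + (1 - lam) * z i) ->
    forall i, (1 <= i <= n)%nat -> y i = z i.

Definition is01 (n : nat) (x : nat -> R) : Prop :=
  forall i, (1 <= i <= n)%nat -> x i = 0 \/ x i = 1.

From Stdlib Require Import Reals List Lra Lia ZArith Classical Bool.
Open Scope R_scope.

(* Let x be an extreme point of P(S, rho). Call a direction d admissible if it is
   supported on the fractional coordinates of x and changes no group sum over S_k unless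
   that group constraint is slack. Apart from the cover constraint w^T x >= b, x can move
   both ways along any admissible d, so by extremality w^T d <> 0 for d <> 0 and the
   admissible directions span at most a line. Unit vectors of S_infinity or of slack
   groups, and differences of two unit vectors of one group, are admissible; hence all
   fractional coordinates lie in one S_k, or are a single coordinate of S_infinity, and
   there are at most two of them. If rho_k < ceil(1/eps) there are exactly two, summing
   to 1, and their mass is moved to the one of larger weight; otherwise they are rounded
   up. The cost grows by at most 2 eps c^T x: item 1 and the groups before S_k already
   cost at least 1 + (k - 1)(1+eps)^(-tau_k), which exceeds 1/eps times the price spread
   inside S_k; a group with rho_k = ceil(1/eps) costs at least 1/eps times its lowest
   price; and items of S_infinity cost at most eps. *)

(** * Finite sums *)

Lemma sum_to_ext f g n :
  (forall i, (1 <= i <= n)%nat -> f i = g i) -> sum_to f n = sum_to g n.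
Proof.
  induction n as [|n IH]; intros H; simpl; [reflexivity|].
  rewrite IH by (intros; apply H; lia). rewrite H by lia. reflexivity.
Qed.

Lemma sum_to_add f g n : sum_to (fun i => f i + g i) n = sum_to f n + sum_to g n.
Proof. induction n as [|n IH]; simpl; [lra|]. rewrite IH. lra. Qed.

Lemma sum_to_scal a f n : sum_to (fun i => a * f i) n = a * sum_to f n.
Proof. induction n as [|n IH]; simpl; [lra|]. rewrite IH. lra. Qed.

Lemma sum_to_le f g n :
  (forall i, (1 <= i <= n)%nat -> f i <= g i) -> sum_to f n <= sum_to g n.
Proof.
  induction n as [|n IH]; intros H; simpl; [lra|].
  assert (sum_to f n <= sum_to g n) by (apply IH; intros; apply H; lia).
  assert (f (S n) <= g (S n)) by (apply H; lia). lra.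
Qed.

Lemma sum_to_eq0 f n : (forall i, (1 <= i <= n)%nat -> f i = 0) -> sum_to f n = 0.
Proof.
  induction n as [|n IH]; intros H; simpl; [reflexivity|].
  rewrite IH by (intros; apply H; lia). rewrite H by lia. lra.
Qed.

Lemma sum_to_remove f n m : (1 <= m <= n)%nat ->
  sum_to f n = f m + sum_to (fun i => if Nat.eqb i m then 0 else f i) n.
Proof.
  induction n as [|n IH]; intros Hm; [lia|]. cbn [sum_to].
  destruct (Nat.eq_dec m (S n)) as [->|Hne].
  - rewrite Nat.eqb_refl, (sum_to_ext (fun i => if Nat.eqb i (S n) then 0 else f i) f); [lra|].
    intros i Hi. destruct (Nat.eqb_spec i (S n)); [lia|reflexivity].
  - rewrite IH by lia. destruct (Nat.eqb_spec (S n) m); [lia|lra].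
Qed.

Lemma sum_to_single f n m : (1 <= m <= n)%nat ->
  (forall i, (1 <= i <= n)%nat -> i <> m -> f i = 0) -> sum_to f n = f m.
Proof.
  intros Hm H. rewrite (sum_to_remove f n m Hm), sum_to_eq0; [lra|].
  intros i Hi. destruct (Nat.eqb_spec i m); auto.
Qed.

Lemma sum_to_pair f n l m : (1 <= l <= n)%nat -> (1 <= m <= n)%nat -> l <> m ->
  (forall i, (1 <= i <= n)%nat -> i <> l -> i <> m -> f i = 0) -> sum_to f n = f l + f m.
Proof.
  intros Hl Hm Hlm H. rewrite (sum_to_remove f n l Hl), (sum_to_single _ n m Hm).
  - destruct (Nat.eqb_spec m l); [lia|reflexivity].
  - intros i Hi Him. destruct (Nat.eqb_spec i l); auto.
Qed.

Lemma sum_to_swap (F : nat -> nat -> R) n k :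
  sum_to (fun i => sum_to (fun m => F m i) k) n = sum_to (fun m => sum_to (F m) n) k.
Proof.
  induction k as [|k IH]; simpl.
  - apply sum_to_eq0. reflexivity.
  - rewrite sum_to_add, IH. reflexivity.
Qed.

Lemma sum_to_ge_const f p a :
  (forall m, (1 <= m <= p)%nat -> a <= f m) -> INR p * a <= sum_to f p.
Proof.
  induction p as [|p IH]; intros H; cbn [sum_to]; [simpl; lra|].
  rewrite S_INR. assert (INR p * a <= sum_to f p) by (apply IH; intros; apply H; lia).
  assert (a <= f (S p)) by (apply H; lia). lra.
Qed.

Lemma sum_to_masked_translate (p : nat -> bool) y d s n :
  sum_to (fun i => if p i then y i + s * d i else 0) n =
  sum_to (fun i => if p i then y i else 0) n + s * sum_to (fun i => if p i then d i else 0) n.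
Proof.
  rewrite <- sum_to_scal, <- sum_to_add. apply sum_to_ext. intros i _. destruct (p i); ring.
Qed.

Lemma sum_to_masked_scal (p : nat -> bool) a y n :
  sum_to (fun i => if p i then a * y i else 0) n = a * sum_to (fun i => if p i then y i else 0) n.
Proof. rewrite <- sum_to_scal. apply sum_to_ext. intros i _. destruct (p i); ring. Qed.

Lemma sum_to_weighted_translate g y d s n :
  sum_to (fun i => g i * (y i + s * d i)) n =
  sum_to (fun i => g i * y i) n + s * sum_to (fun i => g i * d i) n.
Proof. rewrite <- sum_to_scal, <- sum_to_add. apply sum_to_ext. intros i _. ring. Qed.

Lemma sum_to_weighted_scal g a y n :
  sum_to (fun i => g i * (a * y i)) n = a * sum_to (fun i => g i * y i) n.
Proof. rewrite <- sum_to_scal. apply sum_to_ext. intros i _. ring. Qed.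

Definition unit_vec (j : nat) : nat -> R := fun i => if Nat.eqb i j then 1 else 0.

Lemma unit_vec_eq j : unit_vec j j = 1.
Proof. unfold unit_vec. now rewrite Nat.eqb_refl. Qed.

Lemma unit_vec_neq i j : i <> j -> unit_vec j i = 0.
Proof. unfold unit_vec. intros H. now destruct (Nat.eqb_spec i j). Qed.

Lemma unit_vec_supp i j : unit_vec j i <> 0 -> i = j.
Proof. intros H. destruct (Nat.eq_dec i j) as [E|E]; [exact E|now rewrite unit_vec_neq in H]. Qed.

Lemma sum_to_weighted_unit_vec g j n : (1 <= j <= n)%nat ->
  sum_to (fun i => g i * unit_vec j i) n = g j.
Proof.
  intros Hj. rewrite (sum_to_single _ n j Hj); [now rewrite unit_vec_eq, Rmult_1_r|].
  intros i _ Hij. now rewrite unit_vec_neq, Rmult_0_r.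
Qed.

Lemma sum_to_weighted_unit_diff g l m n : (1 <= l <= n)%nat -> (1 <= m <= n)%nat ->
  sum_to (fun i => g i * (unit_vec l i - unit_vec m i)) n = g l - g m.
Proof.
  intros Hl Hm.
  rewrite (sum_to_ext _ (fun i => g i * unit_vec l i + (-1) * (g i * unit_vec m i)))
    by (intros; ring).
  rewrite sum_to_add, sum_to_scal, !sum_to_weighted_unit_vec by assumption. ring.
Qed.

Lemma sum_to_masked_as_weighted (p : nat -> bool) y n :
  sum_to (fun i => if p i then y i else 0) n =
  sum_to (fun i => (if p i then 1 else 0) * y i) n.
Proof. apply sum_to_ext. intros i _. destruct (p i); ring. Qed.

Lemma sum_to_split_01 (p : nat -> bool) f n :
  (forall i, (1 <= i <= n)%nat -> p i = false -> f i = 0 \/ f i = 1) ->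
  exists N, sum_to f n = sum_to (fun i => if p i then f i else 0) n + INR N.
Proof.
  induction n as [|n IH]; intros H; simpl.
  - exists 0%nat. simpl. lra.
  - destruct IH as [N HN]; [intros i Hi Hp; apply H; [lia|exact Hp]|]. rewrite HN.
    destruct (p (S n)) eqn:E.
    + exists N. lra.
    + assert (F : f (S n) = 0 \/ f (S n) = 1) by (apply H; [lia|exact E]).
      destruct F as [F|F]; [exists N|exists (S N)]; rewrite F, ?S_INR; lra.
Qed.

Lemma nat_diff_not_in_01 a b : 0 < INR a - INR b < 1 -> False.
Proof.
  rewrite !INR_IZR_INZ, <- minus_IZR. intros [H0 H1].
  apply lt_IZR in H0. apply lt_IZR in H1. lia.
Qed.

Lemma nat_diff_in_02 a b : 0 < INR a - INR b < 2 -> INR a - INR b = 1.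
Proof.
  rewrite !INR_IZR_INZ, <- minus_IZR. intros [H0 H1].
  apply lt_IZR in H0. apply lt_IZR in H1.
  replace (Z.of_nat a - Z.of_nat b)%Z with 1%Z by lia. reflexivity.
Qed.

(** * Small perturbations *)

Definition near_0_pos (P : R -> Prop) : Prop :=
  exists t, 0 < t /\ forall s, 0 < s <= t -> P s.

Lemma near_0_pos_and (P Q : R -> Prop) :
  near_0_pos P -> near_0_pos Q -> near_0_pos (fun s => P s /\ Q s).
Proof.
  intros [t1 [Ht1 H1]] [t2 [Ht2 H2]]. exists (Rmin t1 t2).
  split; [now apply Rmin_pos|]. intros s Hs.
  pose proof (Rmin_l t1 t2). pose proof (Rmin_r t1 t2).
  split; [apply H1|apply H2]; lra.
Qed.

Lemma near_0_pos_forall (Q : nat -> R -> Prop) N :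
  (forall i, (1 <= i <= N)%nat -> near_0_pos (Q i)) ->
  near_0_pos (fun s => forall i, (1 <= i <= N)%nat -> Q i s).
Proof.
  induction N as [|N IH]; intros H.
  - exists 1. split; [lra|]. intros; lia.
  - destruct (near_0_pos_and _ _ (IH ltac:(intros; apply H; lia)) (H (S N) ltac:(lia)))
      as [t [Ht Hs]].
    exists t. split; [exact Ht|]. intros s Hst i Hi.
    destruct (Hs s Hst) as [Hle HSN].
    destruct (Nat.eq_dec i (S N)) as [->|]; [exact HSN|apply Hle; lia].
Qed.

Lemma near_0_pos_strict a y d :
  a < y -> near_0_pos (fun s => a <= y + s * d /\ a <= y - s * d).
Proof.
  intros Hay. pose proof (Rabs_pos d) as Hd.
  exists ((y - a) / (Rabs d + 1)). split; [apply Rdiv_lt_0_compat; lra|].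
  intros s [Hs Hst].
  assert (Hsd : s * Rabs d <= y - a).
  { apply Rle_trans with (s * (Rabs d + 1)); [nra|].
    apply Rmult_le_reg_r with (/ (Rabs d + 1)); [apply Rinv_0_lt_compat; lra|].
    rewrite Rmult_assoc, Rinv_r by lra. lra. }
  pose proof (Rle_abs d). pose proof (Rle_abs (- d)). rewrite Rabs_Ropp in *. nra.
Qed.

(** * Powers of 1 + eps *)

Section InversePowers.

Variable eps : R.
Hypothesis eps_pos : 0 < eps.

Lemma inv_pow_pos p : 0 < / (1 + eps) ^ p.
Proof. apply Rinv_0_lt_compat, pow_lt. lra. Qed.

Lemma inv_pow_antitone p q : (p <= q)%nat -> / (1 + eps) ^ q <= / (1 + eps) ^ p.
Proof.
  intros H. apply Rinv_le_contravar; [apply pow_lt; lra|]. apply Rle_pow; [lra|exact H].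
Qed.

Lemma inv_pow_le1 p : / (1 + eps) ^ p <= 1.
Proof. pose proof (inv_pow_antitone 0 p ltac:(lia)) as H. simpl in H. lra. Qed.

Lemma inv_pow_ge_linear k : 1 - INR k * eps <= / (1 + eps) ^ k.
Proof.
  induction k as [|k IH]; [simpl; lra|].
  rewrite S_INR, <- tech_pow_Rmult, Rinv_mult.
  pose proof (inv_pow_pos k). pose proof (pos_INR k).
  assert (Hq : 0 < / (1 + eps)) by (apply Rinv_0_lt_compat; lra).
  destruct (Rle_dec (1 - INR k * eps) 0); [nra|].
  (* (1 - (k+1) eps)(1 + eps) <= 1 - k eps *)
  apply Rle_trans with ((1 - INR k * eps) * / (1 + eps)); [|nra].
  apply Rmult_le_reg_r with (1 + eps); [lra|].
  rewrite Rmult_assoc, Rinv_l by lra. nra.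
Qed.

Lemma Meps_ge : 1 / eps <= INR (Meps eps).
Proof.
  unfold Meps, Rceil. set (z := (1 - up (- (1 / eps)))%Z).
  destruct (archimed (- (1 / eps))) as [_ Hup].
  assert (Hz : 1 / eps <= IZR z) by (unfold z; rewrite minus_IZR; lra).
  rewrite INR_IZR_INZ, Z2Nat.id; [exact Hz|].
  apply le_IZR. assert (0 < 1 / eps) by (apply Rdiv_lt_0_compat; lra). lra.
Qed.

Lemma inv_pow_Ceps_le : / (1 + eps) ^ Ceps eps <= eps.
Proof.
  assert (Hl : 0 < ln (1 + eps)) by (rewrite <- ln_1; apply ln_increasing; lra).
  assert (HC : ln (1 / eps) / ln (1 + eps) <= INR (Ceps eps)).
  { unfold Ceps, Rceil. set (r := ln (1 / eps) / ln (1 + eps)).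
    destruct (archimed (- r)) as [_ Hup].
    destruct (Z_lt_le_dec (1 - up (- r)) 0) as [Hneg|Hnn].
    - apply IZR_lt in Hneg. rewrite minus_IZR in Hneg.
      pose proof (pos_INR (Z.to_nat (1 - up (- r)))). lra.
    - rewrite INR_IZR_INZ, Z2Nat.id by exact Hnn. rewrite minus_IZR. lra. }
  assert (Hpow : 1 / eps <= (1 + eps) ^ Ceps eps).
  { apply Rnot_lt_le. intros Hlt. apply ln_increasing in Hlt; [|apply pow_lt; lra].
    rewrite ln_pow in Hlt by lra.
    apply (Rmult_le_compat_r (ln (1 + eps))) in HC; [|lra].
    unfold Rdiv at 1 in HC. rewrite Rmult_assoc, Rinv_l in HC by lra. lra. }
  apply Rle_trans with (/ (1 / eps)); [|right; field; lra].
  apply Rinv_le_contravar; [apply Rdiv_lt_0_compat; lra|exact Hpow].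
Qed.

End InversePowers.

(** * The groups S_k *)

Section Groups.

Variables (eps : R) (n : nat) (c : nat -> R) (tau : list nat).
Hypothesis eps_pos : 0 < eps.
Hypothesis tau_Gamma : in_Gamma eps tau.

Local Notation K := (length tau).
Local Notation C := (Ceps eps).
Local Notation SS k i := (inS eps n c tau k i = true).
Local Notation Sinf i := (inSinf eps n c tau i = true).

Lemma inS_spec k i : SS k i ->
  (2 <= i <= n)%nat /\ c i <= / (1 + eps) ^ nth1 tau k /\
  / (1 + eps) ^ Nat.min (nth1 tau k + k) C < c i.
Proof.
  unfold inS, Rleb, Rltb. cbv zeta. rewrite !andb_true_iff, !Nat.leb_le.
  destruct (Rle_dec _ _), (Rlt_dec _ _); intuition discriminate.
Qed.

Lemma inSinf_spec i : Sinf i -> (2 <= i <= n)%nat /\ c i <= / (1 + eps) ^ C.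
Proof.
  unfold inSinf, Rleb. cbv zeta. rewrite !andb_true_iff, !Nat.leb_le.
  destruct (Rle_dec _ _); intuition discriminate.
Qed.

Lemma inUnion_cases i : inUnion eps n c tau i = true ->
  (exists k, (1 <= k <= K)%nat /\ SS k i) \/ Sinf i.
Proof.
  unfold inUnion. rewrite orb_true_iff, existsb_exists.
  intros [[k [Hk Hs]]|H]; [left|right; exact H].
  apply in_seq in Hk. exists k. split; [lia|exact Hs].
Qed.

Lemma inUnion_inS k i : (1 <= k <= K)%nat -> SS k i -> inUnion eps n c tau i = true.
Proof.
  intros Hk Hs. unfold inUnion. rewrite orb_true_iff, existsb_exists. left.
  exists k. split; [apply in_seq; lia|exact Hs].
Qed.

Lemma inUnion_inSinf i : Sinf i -> inUnion eps n c tau i = true.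
Proof. intros H. unfold inUnion. rewrite H. apply orb_true_r. Qed.

Lemma tau_chain m k : (1 <= m)%nat -> (m < k <= K)%nat ->
  (nth1 tau m + m <= nth1 tau k)%nat.
Proof.
  destruct tau_Gamma as [_ [Hstep _]]. intros Hm Hmk.
  induction k as [|k IH]; [lia|]. replace (S k) with (k + 1)%nat by lia.
  destruct (Nat.eq_dec m k) as [->|Hne]; [apply Hstep; lia|].
  specialize (IH ltac:(lia)). specialize (Hstep k ltac:(lia)). lia.
Qed.

Lemma inS_disjoint m k i : (1 <= m <= K)%nat -> (1 <= k <= K)%nat ->
  SS m i -> SS k i -> m = k.
Proof.
  (* for m < k, S_k lies below the lower end of S_m *)
  assert (Hlt : forall p q, (1 <= p)%nat -> (p < q <= K)%nat -> SS p i -> SS q i -> False).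
  { intros p q Hp Hpq Hsp Hsq.
    apply inS_spec in Hsp as [_ [_ Hlo]]. apply inS_spec in Hsq as [_ [Hhi _]].
    pose proof (tau_chain p q Hp Hpq).
    pose proof (inv_pow_antitone eps eps_pos (Nat.min (nth1 tau p + p) C) (nth1 tau q)
                  ltac:(lia)). lra. }
  intros Hm Hk Hsm Hsk. destruct (lt_eq_lt_dec m k) as [[H|H]|H]; [|exact H|];
    exfalso; [apply (Hlt m k)|apply (Hlt k m)]; auto; lia.
Qed.

Lemma inSinf_inS_disjoint k i : Sinf i -> SS k i -> False.
Proof.
  intros Hinf Hs. apply inSinf_spec in Hinf as [_ Hinf]. apply inS_spec in Hs as [_ [_ Hs]].
  pose proof (inv_pow_antitone eps eps_pos (Nat.min (nth1 tau k + k) C) C ltac:(lia)). lra.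
Qed.

Lemma inS_count_le i v k : 0 <= v -> (k <= K)%nat ->
  sum_to (fun m => if inS eps n c tau m i then v else 0) k <= v.
Proof.
  intros Hv. induction k as [|k IH]; intros Hk; cbn [sum_to]; [lra|].
  destruct (inS eps n c tau (S k) i) eqn:E; [|specialize (IH ltac:(lia)); lra].
  rewrite sum_to_eq0; [lra|]. intros m Hm.
  destruct (inS eps n c tau m i) eqn:E'; [|reflexivity].
  pose proof (inS_disjoint m (S k) i ltac:(lia) ltac:(lia) E' E).
  lia.
Qed.

End Groups.

(** * Moves inside P(S, rho) *)

Definition fractional (n : nat) (y : nat -> R) (i : nat) : Prop :=
  (2 <= i <= n)%nat /\ 0 < y i < 1.

Section Polytope.

Variables (n : nat) (c w : nat -> R) (b eps : R) (tau rho : list nat).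
Hypothesis n_pos : (1 <= n)%nat.
Hypothesis c1 : c 1%nat = 1.
Hypothesis c_nonneg : forall i, (1 <= i <= n)%nat -> 0 <= c i.
Hypothesis w_nonneg : forall i, (1 <= i <= n)%nat -> 0 <= w i.
Hypothesis eps_pos : 0 < eps.
Hypothesis tau_Gamma : in_Gamma eps tau.
Hypothesis rho_valid : valid_rho eps tau rho.

Local Notation P := (inP eps n c w b tau rho).
Local Notation K := (length tau).
Local Notation M := (Meps eps).
Local Notation SS k i := (inS eps n c tau k i = true).
Local Notation union i := (inUnion eps n c tau i = true).
Local Notation gsum k y := (sum_to (fun i => if inS eps n c tau k i then y i else 0) n).
Local Notation cost y := (sum_to (fun i => c i * y i) n).

Lemma rho_range k : (1 <= k <= K)%nat -> (1 <= nth1 rho k <= M)%nat.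
Proof. destruct rho_valid as [Hlen Hr]. intros Hk. apply Hr. lia. Qed.

Lemma inP_bounds y i : P y -> (1 <= i <= n)%nat -> 0 <= y i <= 1.
Proof.
  intros [Hy1 [_ [_ [Hy0 Hybox]]]] Hi.
  destruct (Nat.eq_dec i 1) as [->|Hne]; [rewrite Hy1; lra|].
  destruct (inUnion eps n c tau i) eqn:E; [apply Hybox|rewrite Hy0]; try lra; auto; lia.
Qed.

Lemma inP_01 y i : P y -> (1 <= i <= n)%nat -> ~ fractional n y i -> y i = 0 \/ y i = 1.
Proof.
  intros hy Hi Hfr. destruct (inP_bounds y i hy Hi) as [H0 H1].
  destruct (Req_dec (y i) 0) as [E|E]; [now left|].
  destruct (Req_dec (y i) 1) as [E'|E']; [now right|].
  destruct (Nat.eq_dec i 1) as [->|Hne].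
  - destruct hy as [Hy1 _]. now right.
  - exfalso. apply Hfr. split; [lia|lra].
Qed.

Lemma fractional_inUnion y i : P y -> fractional n y i -> union i.
Proof.
  intros [_ [_ [_ [Hy0 _]]]] [Hi Hyi].
  destruct (inUnion eps n c tau i) eqn:E; [reflexivity|]. rewrite Hy0 in Hyi; [lra|lia|exact E].
Qed.

Lemma inP_gsum_ge y k : P y -> (1 <= k <= K)%nat -> gsum k y >= INR (nth1 rho k).
Proof.
  intros [_ [_ [Hyg _]]] Hk. destruct (Hyg k Hk) as [Heq Hge]. pose proof (rho_range k Hk).
  destruct (Nat.eq_dec (nth1 rho k) M) as [E|E]; [now apply Hge|]. rewrite Heq by lia. lra.
Qed.

Lemma inP_translate y d s : P y ->
  (forall i, (1 <= i <= n)%nat -> d i <> 0 -> (2 <= i)%nat /\ union i) ->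
  0 <= s * sum_to (fun i => w i * d i) n ->
  (forall i, (1 <= i <= n)%nat -> d i <> 0 -> 0 <= y i + s * d i <= 1) ->
  (forall k, (1 <= k <= K)%nat ->
     gsum k d = 0 \/ (nth1 rho k = M /\ gsum k y + s * gsum k d >= INR M)) ->
  P (fun i => y i + s * d i).
Proof.
  intros [Hy1 [Hyw [Hyg [Hy0 Hybox]]]] Hsupp Hw Hbox Hgrp.
  split; [|split; [|split; [|split]]]; cbv beta zeta.
  - destruct (Req_dec (d 1%nat) 0) as [E|E]; [rewrite E, Hy1; ring|].
    apply Hsupp in E; lia.
  - rewrite sum_to_weighted_translate. lra.
  - intros k Hk. rewrite sum_to_masked_translate.
    destruct (Hgrp k Hk) as [E|[Er Eg]].
    + rewrite E, Rmult_0_r, Rplus_0_r. exact (Hyg k Hk).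
    + split; intros; [lia|]. now rewrite Er.
  - intros i Hi Hu. destruct (Req_dec (d i) 0) as [E|E].
    + rewrite E, Hy0 by assumption. ring.
    + apply Hsupp in E as [_ E]; [congruence|lia].
  - intros i Hi Hu. destruct (Req_dec (d i) 0) as [E|E].
    + rewrite E, Rmult_0_r, Rplus_0_r. now apply Hybox.
    + apply Hbox; [lia|exact E].
Qed.

Definition raisable (j : nat) : Prop :=
  (2 <= j <= n)%nat /\ union j /\
  forall k, (1 <= k <= K)%nat -> SS k j -> nth1 rho k = M.

Lemma round_up_coordinate y j : P y -> raisable j ->
  exists y', P y' /\ y' j = 1 /\ (forall i, i <> j -> y' i = y i) /\
             cost y' <= cost y + c j.
Proof.
  intros hy [Hj [Hu Hfull]].
  assert (Hyj : 0 <= y j <= 1) by (apply (inP_bounds y j hy); lia).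
  exists (fun i => y i + (1 - y j) * unit_vec j i).
  split; [|split; [|split]].
  - apply inP_translate; [exact hy| | | |].
    + intros i _ Hi. apply unit_vec_supp in Hi as ->. split; [lia|exact Hu].
    + rewrite sum_to_weighted_unit_vec by lia. pose proof (w_nonneg j ltac:(lia)). nra.
    + intros i _ Hi. apply unit_vec_supp in Hi as ->. rewrite unit_vec_eq. lra.
    + intros k Hk. rewrite sum_to_masked_as_weighted, sum_to_weighted_unit_vec by lia.
      destruct (inS eps n c tau k j) eqn:E; [right|now left].
      split; [now apply Hfull|]. pose proof (inP_gsum_ge y k hy Hk).
      rewrite (Hfull k Hk E) in H. lra.
  - cbv beta. rewrite unit_vec_eq. ring.
  - intros i Hi. cbv beta. rewrite unit_vec_neq by exact Hi. ring.
  - rewrite sum_to_weighted_translate, sum_to_weighted_unit_vec by lia.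
    pose proof (c_nonneg j ltac:(lia)). nra.
Qed.

Lemma round_up_pair y l m : P y -> raisable l -> raisable m ->
  (forall i, (1 <= i <= n)%nat -> fractional n y i -> i = l \/ i = m) ->
  exists y', P y' /\ is01 n y' /\ cost y' <= cost y + c l + c m.
Proof.
  intros hy Hl Hm Hfrac.
  destruct (round_up_coordinate y l hy Hl) as [y1 [hy1 [Hy1l [Hy1 Hc1]]]].
  destruct (round_up_coordinate y1 m hy1 Hm) as [y2 [hy2 [Hy2m [Hy2 Hc2]]]].
  exists y2. split; [exact hy2|split; [|lra]].
  intros i Hi. destruct (Nat.eq_dec i m) as [->|Him]; [now right|].
  rewrite Hy2 by exact Him. destruct (Nat.eq_dec i l) as [->|Hil]; [now right|].
  rewrite Hy1 by exact Hil. apply (inP_01 y i hy Hi).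
  intros Hf. destruct (Hfrac i Hi Hf); contradiction.
Qed.

Lemma gsum_unit_diff k l m k' : (1 <= k <= K)%nat -> SS k l -> SS k m -> (1 <= k' <= K)%nat ->
  gsum k' (fun i => unit_vec l i - unit_vec m i) = 0.
Proof.
  intros Hk Hl Hm Hk'.
  pose proof (inS_spec eps n c tau k l Hl) as [Hlr _].
  pose proof (inS_spec eps n c tau k m Hm) as [Hmr _].
  rewrite sum_to_masked_as_weighted, sum_to_weighted_unit_diff by lia.
  destruct (inS eps n c tau k' l) eqn:El, (inS eps n c tau k' m) eqn:Em; try ring.
  - rewrite (inS_disjoint eps n c tau eps_pos tau_Gamma k' k l) in Em; congruence || lia.
  - rewrite (inS_disjoint eps n c tau eps_pos tau_Gamma k' k m) in El; congruence || lia.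
Qed.

Lemma shift_in_group y k l m : P y -> (1 <= k <= K)%nat -> SS k l -> SS k m -> l <> m ->
  y l + y m = 1 -> w m <= w l ->
  exists y', P y' /\ y' l = 1 /\ y' m = 0 /\ (forall i, i <> l -> i <> m -> y' i = y i) /\
             cost y' = cost y + (c l - c m) * y m.
Proof.
  intros hy Hk Hl Hm Hlm Hsum Hw.
  pose proof (inS_spec eps n c tau k l Hl) as [Hlr _].
  pose proof (inS_spec eps n c tau k m Hm) as [Hmr _].
  assert (Hym : 0 <= y m <= 1) by (apply (inP_bounds y m hy); lia).
  exists (fun i => y i + y m * (unit_vec l i - unit_vec m i)).
  split; [|split; [|split; [|split]]]; cbv beta.
  - apply inP_translate; [exact hy| | | |].
    + intros i _ Hi.
      destruct (Nat.eq_dec i l) as [->|Hil]; [split; [lia|now apply (inUnion_inS _ _ _ _ k)]|].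
      destruct (Nat.eq_dec i m) as [->|Him]; [split; [lia|now apply (inUnion_inS _ _ _ _ k)]|].
      rewrite !unit_vec_neq in Hi by assumption. lra.
    + rewrite sum_to_weighted_unit_diff by lia. nra.
    + intros i _ Hi. destruct (Nat.eq_dec i l) as [->|Hil].
      * rewrite unit_vec_eq, unit_vec_neq by exact Hlm. lra.
      * destruct (Nat.eq_dec i m) as [->|Him]; [rewrite unit_vec_eq, unit_vec_neq by lia; lra|].
        rewrite !unit_vec_neq in Hi by assumption. lra.
    + intros k' Hk'. left. now apply (gsum_unit_diff k).
  - rewrite unit_vec_eq, unit_vec_neq by exact Hlm. lra.
  - rewrite unit_vec_eq, unit_vec_neq by lia. ring.
  - intros i Hil Him. rewrite !unit_vec_neq by assumption. ring.
  - rewrite sum_to_weighted_translate, sum_to_weighted_unit_diff by lia. ring.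
Qed.

Definition same_group (i j : nat) : Prop :=
  i = j \/ exists k, (1 <= k <= K)%nat /\ SS k i /\ SS k j.

Lemma same_group_sym i j : same_group i j -> same_group j i.
Proof. intros [->|[k [Hk [Hi Hj]]]]; [now left|right; now exists k]. Qed.

(** * Cost lower bounds *)

Section Point.

Variable x : nat -> R.
Hypothesis x_in : P x.

Local Notation ip p := (/ (1 + eps) ^ p).
Local Notation gcost k := (sum_to (fun i => if inS eps n c tau k i then c i * x i else 0) n).

Lemma cost_ge_groups k : (k <= K)%nat -> 1 + sum_to (fun m => gcost m) k <= cost x.
Proof.
  intros Hk. rewrite <- (sum_to_swap (fun m i => if inS eps n c tau m i then c i * x i else 0)).
  rewrite (sum_to_remove (fun i => c i * x i) n 1) by lia.
  destruct x_in as [Hx1 _]. rewrite c1, Hx1, Rmult_1_l.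
  rewrite (sum_to_remove _ n 1) by lia.
  rewrite sum_to_eq0.
  2:{ intros m _. destruct (inS eps n c tau m 1) eqn:E; [|reflexivity].
      apply inS_spec in E. lia. }
  rewrite Rplus_0_l. apply Rplus_le_compat_l, sum_to_le. intros i Hi.
  destruct (Nat.eqb_spec i 1) as [->|Hne]; [lra|].
  apply (inS_count_le eps n c tau eps_pos tau_Gamma); [|exact Hk].
  apply Rmult_le_pos; [apply c_nonneg|apply (inP_bounds x i x_in)]; lia.
Qed.

Lemma group_cost_ge k : (1 <= k <= K)%nat ->
  ip (Nat.min (nth1 tau k + k) (Ceps eps)) * INR (nth1 rho k) <= gcost k.
Proof.
  intros Hk. set (L := ip (Nat.min (nth1 tau k + k) (Ceps eps))).
  assert (HL : 0 < L) by apply inv_pow_pos, eps_pos.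
  apply Rle_trans with (L * gsum k x).
  { apply Rmult_le_compat_l; [lra|]. apply Rge_le, inP_gsum_ge; assumption. }
  rewrite <- sum_to_masked_scal. apply sum_to_le. intros i Hi.
  destruct (inS eps n c tau k i) eqn:E; [|lra].
  apply inS_spec in E as [_ [_ E]]. apply Rmult_le_compat_r; [|fold L in E; lra].
  apply (inP_bounds x i x_in Hi).
Qed.

Lemma cost_ge_group k : (1 <= k <= K)%nat ->
  1 + (INR k - 1) * ip (nth1 tau k) + gcost k <= cost x.
Proof.
  intros Hk. pose proof (cost_ge_groups k ltac:(lia)) as H.
  replace k with (S (k - 1)) in H at 1 by lia. cbn [sum_to] in H.
  replace (S (k - 1)) with k in H by lia.
  assert (Hprev : INR (k - 1) * ip (nth1 tau k) <= sum_to (fun m => gcost m) (k - 1)).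
  { apply sum_to_ge_const. intros m Hm. eapply Rle_trans; [|apply group_cost_ge; lia].
    assert (Hr : 1 <= INR (nth1 rho m)) by (apply (le_INR 1), rho_range; lia).
    pose proof (tau_chain eps tau tau_Gamma m k ltac:(lia) ltac:(lia)).
    pose proof (inv_pow_antitone eps eps_pos (Nat.min (nth1 tau m + m) (Ceps eps)) (nth1 tau k)
                  ltac:(lia)).
    pose proof (inv_pow_pos eps eps_pos (Nat.min (nth1 tau m + m) (Ceps eps))). nra. }
  rewrite minus_INR in Hprev by lia. simpl INR in Hprev. lra.
Qed.

Lemma group_lower_end_ge k :
  ip (nth1 tau k) * (1 - INR k * eps) <= ip (Nat.min (nth1 tau k + k) (Ceps eps)).
Proof.
  apply Rle_trans with (ip (nth1 tau k + k)); [|apply inv_pow_antitone; lia || lra].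
  rewrite pow_add, Rinv_mult.
  apply Rmult_le_compat_l; [apply Rlt_le, inv_pow_pos, eps_pos|apply inv_pow_ge_linear, eps_pos].
Qed.

Lemma cost_ge_1 : 1 <= cost x.
Proof. pose proof (cost_ge_groups 0 ltac:(lia)). simpl in H. lra. Qed.

Lemma full_group_cost_le k i : (1 <= k <= K)%nat -> nth1 rho k = M ->
  inS eps n c tau k i = true -> c i <= eps * cost x.
Proof.
  intros Hk Hfull Hi. apply inS_spec in Hi as [_ [Hci _]].
  pose proof (cost_ge_group k Hk) as Hcost. pose proof (group_cost_ge k Hk) as Hg.
  pose proof (group_lower_end_ge k) as Hlow. rewrite Hfull in Hg.
  pose proof (Meps_ge eps eps_pos) as HM.
  set (a := ip (nth1 tau k)) in *. set (L := ip (Nat.min (nth1 tau k + k) (Ceps eps))) in *.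
  set (g := gcost k) in *.
  assert (Ha : a <= 1) by apply inv_pow_le1, eps_pos.
  assert (HL : 0 < L) by apply inv_pow_pos, eps_pos.
  assert (HepsM : 1 <= eps * INR M).
  { apply Rmult_le_compat_l with (r := eps) in HM; [|lra].
    replace (eps * (1 / eps)) with 1 in HM by (field; lra). exact HM. }
  (* [a <= L + k eps a <= eps g + eps (1 + (k - 1) a) <= eps * cost x] *)
  assert (HLg : L <= eps * g) by nra.
  nra.
Qed.

Lemma group_spread_le k i j : (1 <= k <= K)%nat ->
  inS eps n c tau k i = true -> inS eps n c tau k j = true -> c i - c j <= eps * cost x.
Proof.
  intros Hk Hi Hj. apply inS_spec in Hi as [_ [Hci _]]. apply inS_spec in Hj as [_ [_ Hcj]].
  pose proof (cost_ge_group k Hk) as Hcost. pose proof (group_cost_ge k Hk) as Hg.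
  pose proof (group_lower_end_ge k) as Hlow.
  set (a := ip (nth1 tau k)) in *. set (L := ip (Nat.min (nth1 tau k + k) (Ceps eps))) in *.
  assert (Ha : 0 < a <= 1) by (split; [apply inv_pow_pos|apply inv_pow_le1]; apply eps_pos).
  assert (HL : 0 < L) by apply inv_pow_pos, eps_pos.
  assert (Hg0 : 0 <= gcost k) by (pose proof (pos_INR (nth1 rho k)); nra).
  assert (Hk1 : 1 <= INR k) by (apply (le_INR 1); lia).
  nra.
Qed.

Lemma Sinf_cost_le i : inSinf eps n c tau i = true -> c i <= eps * cost x.
Proof.
  intros Hi. apply inSinf_spec in Hi as [_ Hci].
  pose proof (inv_pow_Ceps_le eps eps_pos). pose proof cost_ge_1. nra.
Qed.

(** * Fractional coordinates of an extreme point *)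

Hypothesis x_extreme : forall y z lam, P y -> P z -> 0 < lam < 1 ->
  (forall i, (1 <= i <= n)%nat -> x i = lam * y i + (1 - lam) * z i) ->
  forall i, (1 <= i <= n)%nat -> y i = z i.

Local Notation frac i := (fractional n x i).

Definition slack_group k : Prop := nth1 rho k = M /\ gsum k x > INR M.

Lemma nonslack_gsum k : (1 <= k <= K)%nat -> ~ slack_group k -> gsum k x = INR (nth1 rho k).
Proof.
  intros Hk Hns. destruct x_in as [_ [_ [Hg _]]]. destruct (Hg k Hk) as [Heq Hge].
  pose proof (rho_range k Hk).
  destruct (Nat.eq_dec (nth1 rho k) M) as [E|E]; [|apply Heq; lia].
  specialize (Hge E). rewrite E in *. destruct (Rle_dec (gsum k x) (INR M)); [lra|].
  exfalso. apply Hns. split; [exact E|lra].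
Qed.

(* The directions along which [x] may move both ways without leaving [P], if it
   were not for the cover constraint [w^T x >= b]. *)
Definition admissible (d : nat -> R) : Prop :=
  (forall i, (1 <= i <= n)%nat -> d i <> 0 -> frac i) /\
  (forall k, (1 <= k <= K)%nat -> gsum k d = 0 \/ slack_group k).

Lemma admissible_lin u v a a' : admissible u -> admissible v ->
  admissible (fun i => a * u i + a' * v i).
Proof.
  intros [Su Gu] [Sv Gv]. split.
  - intros i Hi Hd. destruct (Req_dec (u i) 0) as [E|E]; [|now apply Su].
    destruct (Req_dec (v i) 0) as [E'|E']; [|now apply Sv].
    exfalso. apply Hd. rewrite E, E'. ring.
  - intros k Hk. rewrite sum_to_masked_translate, sum_to_masked_scal.
    destruct (Gu k Hk) as [E|]; [|now right]. destruct (Gv k Hk) as [E'|]; [|now right].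
    left. rewrite E, E'. ring.
Qed.

(* Otherwise [x] is the midpoint of [x + t d] and [x - t d] for a small [t > 0]. *)
Lemma admissible_w_orth_eq0 d : admissible d -> sum_to (fun i => w i * d i) n = 0 ->
  forall i, (1 <= i <= n)%nat -> d i = 0.
Proof.
  intros [Hsupp Hgrp] Hw.
  assert (Hsmall : near_0_pos (fun s =>
     (forall i, (1 <= i <= n)%nat -> d i <> 0 ->
        0 <= x i + s * d i <= 1 /\ 0 <= x i + - s * d i <= 1) /\
     (forall k, (1 <= k <= K)%nat -> slack_group k ->
        gsum k x + s * gsum k d >= INR M /\ gsum k x + - s * gsum k d >= INR M))).
  { apply near_0_pos_and; apply near_0_pos_forall.
    - intros i Hi. destruct (Req_dec (d i) 0) as [E|E].
      { exists 1. split; [lra|]. intros; contradiction. }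
      destruct (Hsupp i Hi E) as [_ Hxi].
      destruct (near_0_pos_and _ _ (near_0_pos_strict 0 (x i) (d i) ltac:(lra))
                  (near_0_pos_strict (-1) (- x i) (d i) ltac:(lra))) as [t [Ht H]].
      exists t. split; [exact Ht|]. intros s Hs _. specialize (H s Hs). lra.
    - intros k Hk. destruct (classic (slack_group k)) as [[_ Hsl]|Hns].
      2:{ exists 1. split; [lra|]. intros; contradiction. }
      destruct (near_0_pos_strict (INR M) (gsum k x) (gsum k d) ltac:(lra)) as [t [Ht H]].
      exists t. split; [exact Ht|]. intros s Hs _. specialize (H s Hs). lra. }
  destruct Hsmall as [t [Ht Hsmall]]. destruct (Hsmall t ltac:(lra)) as [Hbox Hslack].
  assert (Hmove : forall s, s = t \/ s = - t -> P (fun i => x i + s * d i)).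
  { intros s Hs. apply inP_translate; [exact x_in| | | |].
    - intros i Hi Hd. split; [destruct (Hsupp i Hi Hd); lia|].
      apply (fractional_inUnion x i x_in), Hsupp; assumption.
    - rewrite Hw. lra.
    - intros i Hi Hd. destruct (Hbox i Hi Hd). destruct Hs as [->| ->]; assumption.
    - intros k Hk. destruct (Hgrp k Hk) as [E|Hsl]; [now left|right].
      split; [apply Hsl|]. destruct (Hslack k Hk Hsl). destruct Hs as [->| ->]; assumption. }
  intros i Hi.
  assert (E : x i + t * d i = x i + - t * d i).
  { apply (x_extreme _ _ (1 / 2) (Hmove t (or_introl eq_refl)) (Hmove (- t) (or_intror eq_refl)));
      [lra| |exact Hi].
    intros j _. field. }
  assert (Htd : t * d i = 0) by lra.
  apply Rmult_integral in Htd as [Htd|Htd]; lra.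
Qed.

(* Admissible directions form a linear space on which [d |-> w^T d] is injective, so it
   has dimension at most one. *)
Lemma admissible_independent u v p q : admissible u -> admissible v ->
  (1 <= p <= n)%nat -> (1 <= q <= n)%nat ->
  u p <> 0 -> v p = 0 -> v q <> 0 -> u q = 0 -> False.
Proof.
  intros Hu Hv Hp Hq Hup Hvp Hvq Huq.
  set (A := sum_to (fun i => w i * v i) n). set (B := sum_to (fun i => w i * u i) n).
  assert (Hw : sum_to (fun i => w i * (A * u i + - B * v i)) n = 0).
  { rewrite sum_to_weighted_translate, sum_to_weighted_scal. fold A B. ring. }
  pose proof (admissible_w_orth_eq0 _ (admissible_lin u v A (- B) Hu Hv) Hw) as Hz.
  pose proof (Hz p Hp) as Ep. pose proof (Hz q Hq) as Eq. cbv beta in Ep, Eq.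
  rewrite Hvp in Ep. rewrite Huq in Eq.
  assert (HB : B = 0) by (apply (Rmult_eq_reg_r (v q)); lra).
  exact (Hup (admissible_w_orth_eq0 u Hu HB p Hp)).
Qed.

Lemma admissible_unit j : frac j ->
  (forall k, (1 <= k <= K)%nat -> SS k j -> slack_group k) -> admissible (unit_vec j).
Proof.
  intros Hj Hsl. split.
  - intros i _ H. apply unit_vec_supp in H. now subst.
  - intros k Hk.
    rewrite sum_to_masked_as_weighted, sum_to_weighted_unit_vec by (destruct Hj; lia).
    destruct (inS eps n c tau k j) eqn:E; [right; now apply Hsl|now left].
Qed.

Lemma admissible_unit_diff k j j' : (1 <= k <= K)%nat -> SS k j -> SS k j' ->
  frac j -> frac j' -> admissible (fun i => unit_vec j i - unit_vec j' i).
Proof.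
  intros Hk Hs Hs' Hj Hj'. split.
  - intros i _ H. destruct (Nat.eq_dec i j) as [->|Hij]; [exact Hj|].
    destruct (Nat.eq_dec i j') as [->|Hij']; [exact Hj'|].
    rewrite !unit_vec_neq in H by assumption. lra.
  - intros k' Hk'. left. now apply (gsum_unit_diff k).
Qed.

(* The group sum is the integer [rho_k]. *)
Lemma nonslack_group_other_frac k m : (1 <= k <= K)%nat -> ~ slack_group k -> SS k m -> frac m ->
  exists m', m' <> m /\ SS k m' /\ frac m'.
Proof.
  intros Hk Hns Hs Hm. apply NNPP. intros Hnone.
  pose proof (nonslack_gsum k Hk Hns) as G.
  destruct (sum_to_split_01 (fun i => Nat.eqb i m)
              (fun i => if inS eps n c tau k i then x i else 0) n) as [N HN].
  { intros i Hi Hp. apply Nat.eqb_neq in Hp. destruct (inS eps n c tau k i) eqn:E; [|now left].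
    apply (inP_01 x i x_in Hi). intros Hf. apply Hnone. now exists i. }
  rewrite HN, (sum_to_single _ n m) in G.
  - rewrite Nat.eqb_refl, Hs in G. apply (nat_diff_not_in_01 (nth1 rho k) N). destruct Hm. lra.
  - destruct Hm; lia.
  - intros i _ Hi. apply Nat.eqb_neq in Hi. now rewrite Hi.
Qed.

Lemma tight_pair_sum k l m : (1 <= k <= K)%nat -> (nth1 rho k < M)%nat ->
  SS k l -> SS k m -> l <> m -> frac l -> frac m ->
  (forall j, frac j -> j = l \/ j = m) -> x l + x m = 1.
Proof.
  intros Hk Hr Hl Hm Hlm Fl Fm Hall.
  assert (G : gsum k x = INR (nth1 rho k)) by (apply nonslack_gsum; [exact Hk|intros [E _]; lia]).
  destruct (sum_to_split_01 (fun i => Nat.eqb i l || Nat.eqb i m)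
              (fun i => if inS eps n c tau k i then x i else 0) n) as [N HN].
  { intros i Hi Hp. apply orb_false_iff in Hp as [Hil Him].
    apply Nat.eqb_neq in Hil. apply Nat.eqb_neq in Him.
    destruct (inS eps n c tau k i) eqn:E; [|now left].
    apply (inP_01 x i x_in Hi). intros Hf. destruct (Hall i Hf); contradiction. }
  rewrite HN, (sum_to_pair _ n l m) in G; [| destruct Fl; lia | destruct Fm; lia | exact Hlm |].
  - rewrite !Nat.eqb_refl, orb_true_r, Hl, Hm in G. simpl in G.
    assert (Hd : INR (nth1 rho k) - INR N = 1) by (apply nat_diff_in_02; destruct Fl, Fm; lra).
    lra.
  - intros i _ Hil Him. apply Nat.eqb_neq in Hil. apply Nat.eqb_neq in Him.
    now rewrite Hil, Him.
Qed.

Lemma frac_direction j : frac j -> exists v, admissible v /\ v j <> 0 /\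
  forall i, (1 <= i <= n)%nat -> v i <> 0 -> same_group i j.
Proof.
  intros Hj.
  destruct (classic (forall k, (1 <= k <= K)%nat -> SS k j -> slack_group k)) as [Hsl|Hnsl].
  - exists (unit_vec j). split; [now apply admissible_unit|]. rewrite unit_vec_eq.
    split; [lra|]. intros i _ Hi. apply unit_vec_supp in Hi. now left.
  - apply not_all_ex_not in Hnsl as [k Hk].
    apply imply_to_and in Hk as [Hk Hk']. apply imply_to_and in Hk' as [Hs Hns].
    destruct (nonslack_group_other_frac k j Hk Hns Hs Hj) as [j' [Hne [Hs' Hj']]].
    exists (fun i => unit_vec j i - unit_vec j' i).
    split; [now apply (admissible_unit_diff k)|].
    rewrite unit_vec_eq, (unit_vec_neq j j') by congruence. split; [lra|].
    intros i _ Hi. destruct (Nat.eq_dec i j) as [->|Hij]; [now left|]. right. exists k.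
    destruct (Nat.eq_dec i j') as [->|Hij']; [now split|].
    rewrite !unit_vec_neq in Hi by assumption. lra.
Qed.

Lemma frac_same_group i j : frac i -> frac j -> same_group i j.
Proof.
  intros Hi Hj. apply NNPP. intros Hne.
  destruct (frac_direction i Hi) as [u [Hu [Hui Hsu]]].
  destruct (frac_direction j Hj) as [v [Hv [Hvj Hsv]]].
  destruct Hi as [Hir _], Hj as [Hjr _].
  apply (admissible_independent u v i j Hu Hv); [lia|lia|exact Hui| |exact Hvj|].
  - apply NNPP. intros Hvi. apply Hne, Hsv; [lia|exact Hvi].
  - apply NNPP. intros Huj. apply Hne, same_group_sym, Hsu; [lia|exact Huj].
Qed.

Lemma frac_in_group k l j : (1 <= k <= K)%nat -> SS k l -> frac l -> frac j -> SS k j.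
Proof.
  intros Hk Hl Fl Fj. destruct (frac_same_group l j Fl Fj) as [<-|[k' [Hk' [Hl' Hj']]]];
    [exact Hl|]. now rewrite (inS_disjoint eps n c tau eps_pos tau_Gamma k k' l).
Qed.

Lemma frac_Sinf_eq l j : inSinf eps n c tau l = true -> frac l -> frac j -> j = l.
Proof.
  intros Hinf Fl Fj. destruct (frac_same_group l j Fl Fj) as [->|[k [_ [Hl _]]]]; [reflexivity|].
  exfalso. exact (inSinf_inS_disjoint eps n c tau eps_pos k l Hinf Hl).
Qed.

Lemma frac_third_eq l m j : frac l -> frac m -> l <> m -> frac j -> j = l \/ j = m.
Proof.
  intros Fl Fm Hlm Fj.
  destruct (Nat.eq_dec j l) as [|Hjl]; [now left|].
  destruct (Nat.eq_dec j m) as [|Hjm]; [now right|].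
  exfalso. destruct (frac_same_group l m Fl Fm) as [|[k [Hk [Hl Hm]]]]; [contradiction|].
  pose proof (frac_in_group k l j Hk Hl Fl Fj) as Hj.
  pose proof (proj1 Fm) as Hmr. pose proof (proj1 Fj) as Hjr.
  apply (admissible_independent (fun i => unit_vec l i - unit_vec m i)
                                (fun i => unit_vec l i - unit_vec j i) m j);
    [now apply (admissible_unit_diff k)|now apply (admissible_unit_diff k)|lia|lia| | | |];
    rewrite ?unit_vec_eq, ?(unit_vec_neq m l), ?(unit_vec_neq m j), ?(unit_vec_neq j l),
      ?(unit_vec_neq j m) by congruence; lra.
Qed.

Lemma frac_at_most_two l : frac l -> exists m, frac m /\ forall j, frac j -> j = l \/ j = m.
Proof.
  intros Fl. destruct (classic (exists m, frac m /\ m <> l)) as [[m [Fm Hml]]|Hnone].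
  - exists m. split; [exact Fm|]. intros j Fj. apply (frac_third_eq l m j); auto.
  - exists l. split; [exact Fl|]. intros j Fj. left.
    apply NNPP. intros Hjl. apply Hnone. now exists j.
Qed.

(** * Rounding *)

Definition rounds_well (xb : nat -> R) : Prop :=
  P xb /\ is01 n xb /\ cost xb <= (1 + 2 * eps) * cost x.

Lemma raisable_full_group k j : (1 <= k <= K)%nat -> nth1 rho k = M -> SS k j -> raisable j.
Proof.
  intros Hk Hfull Hj. split; [apply (inS_spec eps n c tau k j Hj)|].
  split; [now apply (inUnion_inS _ _ _ _ k)|].
  intros k' Hk' Hj'. now rewrite (inS_disjoint eps n c tau eps_pos tau_Gamma k' k j).
Qed.

Lemma raisable_Sinf j : inSinf eps n c tau j = true -> raisable j.
Proof.
  intros Hj. split; [apply (inSinf_spec eps n c tau j Hj)|].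
  split; [now apply inUnion_inSinf|].
  intros k _ Hk. exfalso. exact (inSinf_inS_disjoint eps n c tau eps_pos k j Hj Hk).
Qed.

Lemma rounding_Sinf l : inSinf eps n c tau l = true -> frac l -> exists xb, rounds_well xb.
Proof.
  intros Hinf Fl.
  destruct (round_up_pair x l l x_in (raisable_Sinf l Hinf) (raisable_Sinf l Hinf))
    as [xb [Hxb [H01 Hcost]]].
  { intros i _ Fi. left. exact (frac_Sinf_eq l i Hinf Fl Fi). }
  exists xb. split; [exact Hxb|split; [exact H01|]].
  pose proof (Sinf_cost_le l Hinf). lra.
Qed.

Lemma rounding_full_group k l : (1 <= k <= K)%nat -> nth1 rho k = M -> SS k l -> frac l ->
  exists xb, rounds_well xb.
Proof.
  intros Hk Hfull Hl Fl. destruct (frac_at_most_two l Fl) as [m [Fm Hall]].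
  pose proof (frac_in_group k l m Hk Hl Fl Fm) as Hm.
  destruct (round_up_pair x l m x_in (raisable_full_group k l Hk Hfull Hl)
              (raisable_full_group k m Hk Hfull Hm)) as [xb [Hxb [H01 Hcost]]].
  { intros i _ Fi. exact (Hall i Fi). }
  exists xb. split; [exact Hxb|split; [exact H01|]].
  pose proof (full_group_cost_le k l Hk Hfull Hl).
  pose proof (full_group_cost_le k m Hk Hfull Hm). lra.
Qed.

Lemma rounding_shift k l m : (1 <= k <= K)%nat -> SS k l -> SS k m -> l <> m ->
  frac l -> frac m -> (forall j, frac j -> j = l \/ j = m) ->
  x l + x m = 1 -> w m <= w l -> exists xb, rounds_well xb.
Proof.
  intros Hk Hl Hm Hlm Fl Fm Hall Hsum Hw.
  destruct (shift_in_group x k l m x_in Hk Hl Hm Hlm Hsum Hw)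
    as [xb [Hxb [Hxl [Hxm [Hx Hcost]]]]].
  exists xb. split; [exact Hxb|split].
  - intros i Hi. destruct (Nat.eq_dec i l) as [->|Hil]; [now right|].
    destruct (Nat.eq_dec i m) as [->|Him]; [now left|].
    rewrite Hx by assumption. apply (inP_01 x i x_in Hi).
    intros Fi. destruct (Hall i Fi); contradiction.
  - rewrite Hcost. pose proof (group_spread_le k l m Hk Hl Hm). pose proof cost_ge_1.
    destruct Fm as [_ Fm].
    assert ((c l - c m) * x m <= eps * cost x * x m) by (apply Rmult_le_compat_r; lra).
    assert (eps * cost x * x m <= eps * cost x * 1) by (apply Rmult_le_compat_l; nra).
    assert (0 <= eps * cost x) by nra. lra.
Qed.

Lemma rounding_tight_group k l : (1 <= k <= K)%nat -> (nth1 rho k < M)%nat -> SS k l -> frac l ->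
  exists xb, rounds_well xb.
Proof.
  intros Hk Hr Hl Fl.
  destruct (nonslack_group_other_frac k l Hk ltac:(intros [E _]; lia) Hl Fl) as [m [Hml [Hm Fm]]].
  assert (Hall : forall j, frac j -> j = l \/ j = m) by (intros j; now apply frac_third_eq).
  assert (Hsum : x l + x m = 1) by (apply (tight_pair_sum k); auto).
  destruct (Rle_dec (w m) (w l)) as [Hw|Hw].
  - apply (rounding_shift k l m); auto.
  - apply (rounding_shift k m l); auto; [|lra|lra].
    intros j Fj. destruct (Hall j Fj); [now right|now left].
Qed.

Lemma extreme_point_rounding : exists xb, rounds_well xb.
Proof.
  destruct (classic (exists l, frac l)) as [[l Fl]|Hnone].
  - destruct (inUnion_cases eps n c tau l (fractional_inUnion x l x_in Fl))
      as [[k [Hk Hl]]|Hinf]; [|exact (rounding_Sinf l Hinf Fl)].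
    pose proof (rho_range k Hk).
    destruct (Nat.eq_dec (nth1 rho k) M) as [Hfull|Htight].
    + exact (rounding_full_group k l Hk Hfull Hl Fl).
    + apply (rounding_tight_group k l); [exact Hk|lia|exact Hl|exact Fl].
  - exists x. split; [exact x_in|split].
    + intros i Hi. apply (inP_01 x i x_in Hi). intros Fi. apply Hnone. now exists i.
    + pose proof cost_ge_1. nra.
Qed.

End Point.

End Polytope.

Theorem lemma4 (n : nat) (c w : nat -> R) (b eps : R) (tau rho : list nat)
  (hn : (1 <= n)%nat)
  (hc_nonneg : forall i, (1 <= i <= n)%nat -> 0 <= c i)
  (hw_nonneg : forall i, (1 <= i <= n)%nat -> 0 <= w i)
  (hc1 : c 1%nat = 1)
  (hc_sorted : forall i j, (1 <= i <= j)%nat -> (j <= n)%nat -> c j <= c i)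
  (heps : 0 < eps <= 1 / 256)
  (htau : in_Gamma eps tau)
  (hrho : valid_rho eps tau rho)
  (xs : nat -> R)
  (hxs : extreme_point n (inP eps n c w b tau rho) xs) :
  exists xb : nat -> R,
    inP eps n c w b tau rho xb /\ is01 n xb /\
    sum_to (fun i => c i * xb i) n <= (1 + 2 * eps) * sum_to (fun i => c i * xs i) n.
Proof.
  destruct hxs as [hP hext].
  apply (extreme_point_rounding n c w b eps tau rho); try assumption. lra.
Qed.
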